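(* Let $N$ be a torsion-free finitely generated nilpotent group of nilpotency class $2$ with a finite generating subset $S$. For $x\in N$ let $I_x=\{[y,x]: y\in N\}\le\gamma_2(N)$, where $[a,b]=aba^{-1}b^{-1}$. Then there exists $C>0$ such that $\|I_x\|_S\le C\sqrt{\|x\|_S}$ for every $x\in N$.
   Context: $\|\cdot\|_S$ is word length; for a subgroup $H$, $\|H\|_S=\min\{\max_{h\in X}\|h\|_S: X\text{ a finite generating subset of }H\}$. In class $2$, $y\mapsto[y,x]=y\,x\,y^{-1}x^{-1}$ is a homomorphism $N\to\gamma_2(N)=[N,N]$ and $I_x$ is its image (the image of the map $\psi_{\mathrm{Inn}(x),2}$ in the paper). *)

From Stdlib Require Import Reals List.
Import ListNotations.
Open Scope R_scope.

Record Group := {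
  carrier :> Type;
  gmul : carrier -> carrier -> carrier;
  ginv : carrier -> carrier;
  gone : carrier;
  gmul_assoc : forall a b c, gmul a (gmul b c) = gmul (gmul a b) c;
  gmul_1l : forall a, gmul gone a = a;
  gmul_1r : forall a, gmul a gone = a;
  gmul_Vl : forall a, gmul (ginv a) a = gone;
  gmul_Vr : forall a, gmul a (ginv a) = gone
}.

Section Defs.
Variable N : Group.

Definition comm (a b : N) : N :=
  gmul N a (gmul N b (gmul N (ginv N a) (ginv N b))).

Fixpoint gpow (x : N) (n : nat) : N :=
  match n with O => gone N | S k => gmul N x (gpow x k) end.

Definition torsion_free : Prop :=
  forall (x : N) (n : nat), (0 < n)%nat -> gpow x n = gone N -> x = gone N.

Definition nilpotent_class_2 : Prop :=
  (forall a b c : N, comm (comm a b) c = gone N) /\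
  (exists a b : N, comm a b <> gone N).

(* words: letters (s, true) = s, (s, false) = s^-1 *)
Definition eval_word (w : list (N * bool)) : N :=
  fold_right (fun (l : N * bool) (acc : N) => gmul N (if snd l then fst l else ginv N (fst l)) acc)
             (gone N) w.

Definition word_over (X : list N) (w : list (N * bool)) : Prop :=
  forall l, In l w -> In (fst l) X.

Definition generates (X : list N) (H : N -> Prop) : Prop :=
  (forall h, In h X -> H h) /\
  (forall h, H h -> exists w, word_over X w /\ eval_word w = h).

Definition is_word_length (S : list N) (x : N) (n : nat) : Prop :=
  (exists w, word_over S w /\ eval_word w = x /\ length w = n) /\
  (forall w, word_over S w -> eval_word w = x -> (n <= length w)%nat).

(* m is ||H||_S = min over finite generating subsets X of H of max_{h in X} ||h||_S
   (max over the empty set is 0) *)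
Definition bounded_gen_set (S : list N) (X : list N) (m : nat) : Prop :=
  forall h, In h X -> exists k, is_word_length S h k /\ (k <= m)%nat.

Definition is_subgroup_norm (S : list N) (H : N -> Prop) (m : nat) : Prop :=
  (exists X, generates X H /\ bounded_gen_set S X m) /\
  (forall X m', generates X H -> bounded_gen_set S X m' -> (m <= m')%nat).

Definition I_ (x : N) : N -> Prop := fun z => exists y, z = comm y x.

End Defs.

(* In class 2 the commutator is bilinear with central values.  Hence I_x is
   generated by the commutators [s,x], s in S, and if x is a word of length n
   then [s,x] = prod_t [s,t]^(p_t) [t,s]^(q_t), where p_t, q_t <= n count the
   occurrences of t and t^-1 in the word.  A power of a commutator of
   generators is short: with a = floor (sqrt k) and k = a b + r (r < a, so
   b <= a + 2), [u,v]^k = [u^a, v^b] [u,v]^r has length at most 12 sqrt k.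
   So every [s,x] has length at most 24 |S| sqrt n. *)

From Stdlib Require Import Reals List Lia Lra Arith Wf_nat ClassicalEpsilon Classical.
Import ListNotations.
Open Scope R_scope.

Section GroupFacts.
Variable N : Group.
Local Notation "a ** b" := (gmul N a b) (at level 40, left associativity).
Local Notation "a ^-" := (ginv N a) (at level 30).
Local Notation e := (gone N).

Lemma mulKg (a b : N) : a ^- ** (a ** b) = b.
Proof. rewrite gmul_assoc, gmul_Vl, gmul_1l; reflexivity. Qed.

Lemma mulKVg (a b : N) : a ** (a ^- ** b) = b.
Proof. rewrite gmul_assoc, gmul_Vr, gmul_1l; reflexivity. Qed.

Ltac gsimpl :=
  repeat rewrite <- gmul_assoc;
  repeat (rewrite mulKg || rewrite mulKVg || rewrite gmul_Vr || rewrite gmul_Vl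
          || rewrite gmul_1l || rewrite gmul_1r);
  try reflexivity.

Lemma invg_unique (a b : N) : a ** b = e -> b = a ^-.
Proof. intro H. rewrite <- (mulKg a b), H, gmul_1r. reflexivity. Qed.

Lemma invgK (a : N) : (a ^-) ^- = a.
Proof. symmetry. apply invg_unique, gmul_Vl. Qed.

Lemma invMg (a b : N) : (a ** b) ^- = b ^- ** a ^-.
Proof. symmetry. apply invg_unique. gsimpl. Qed.

Lemma invg1 : e ^- = e.
Proof. symmetry. apply invg_unique, gmul_1l. Qed.

Lemma invg_comm (a b : N) : (comm N a b) ^- = comm N b a.
Proof. symmetry. apply invg_unique. unfold comm. gsimpl. Qed.

Lemma commute_comm1 (a b : N) : comm N a b = e -> a ** b = b ** a.
Proof.
  unfold comm. intro H. rewrite gmul_assoc in H.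
  rewrite <- (gmul_1l N (b ** a)), <- H. gsimpl.
Qed.

Definition central (z : N) : Prop := forall c, z ** c = c ** z.

Lemma central_inv (z : N) : central z -> central (z ^-).
Proof.
  intros Hz c. transitivity (z ^- ** (c ** z) ** z ^-).
  - gsimpl.
  - rewrite <- Hz. gsimpl.
Qed.

Lemma gpow_add (x : N) (p q : nat) : gpow N x (p + q) = gpow N x p ** gpow N x q.
Proof.
  induction p as [|p IH]; simpl.
  - rewrite gmul_1l. reflexivity.
  - rewrite IH, gmul_assoc. reflexivity.
Qed.

Lemma gpow_mul (x : N) (p q : nat) : gpow N x (p * q) = gpow N (gpow N x q) p.
Proof. induction p as [|p IH]; simpl; [|rewrite gpow_add, IH]; reflexivity. Qed.

Definition map_letters (f : N -> N) (w : list (N * bool)) : list (N * bool) :=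
  map (fun l => (f (fst l), snd l)) w.

Definition morphism (f : N -> N) : Prop := forall a b, f (a ** b) = f a ** f b.

Section Morphism.
Variable f : N -> N.
Hypothesis f_morph : morphism f.

Lemma morph1 : f e = e.
Proof.
  assert (H : f e ** f e = f e) by (rewrite <- f_morph, gmul_1l; reflexivity).
  transitivity (f e ^- ** (f e ** f e)).
  - rewrite mulKg. reflexivity.
  - rewrite H. apply gmul_Vl.
Qed.

Lemma morphV (a : N) : f (a ^-) = (f a) ^-.
Proof. apply invg_unique. rewrite <- f_morph, gmul_Vr. apply morph1. Qed.

Lemma morph_gpow (x : N) (k : nat) : f (gpow N x k) = gpow N (f x) k.
Proof. induction k as [|k IH]; simpl; [apply morph1|rewrite f_morph, IH; reflexivity]. Qed.

Lemma morph_eval_word (w : list (N * bool)) :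
  f (eval_word N w) = eval_word N (map_letters f w).
Proof.
  induction w as [|[u b] w IH]; simpl; [apply morph1|].
  rewrite f_morph, IH. destruct b; [|rewrite morphV]; reflexivity.
Qed.
End Morphism.

Definition letter_eq_dec (l l' : N * bool) : {l = l'} + {l <> l'} :=
  excluded_middle_informative (l = l').

Definition collected (f : N -> N) (T : list N) (w : list (N * bool)) : N :=
  fold_right (fun t acc =>
      gpow N (f t) (count_occ letter_eq_dec w (t, true))
      ** gpow N (f t ^-) (count_occ letter_eq_dec w (t, false)) ** acc) e T.

Lemma collected_cons (f : N -> N) (t : N) (T : list N) (w : list (N * bool)) :
  collected f (t :: T) w =
  gpow N (f t) (count_occ letter_eq_dec w (t, true))
  ** gpow N (f t ^-) (count_occ letter_eq_dec w (t, false)) ** collected f T w.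
Proof. reflexivity. Qed.

Lemma collected_nil (f : N -> N) (T : list N) : collected f T [] = e.
Proof. induction T as [|t T IH]; [|rewrite collected_cons, IH; simpl; gsimpl]; reflexivity. Qed.

Lemma collected_cons_notin (f : N -> N) (T : list N) (l : N * bool) (w : list (N * bool)) :
  ~ In (fst l) T -> collected f T (l :: w) = collected f T w.
Proof.
  induction T as [|t T IH]; intro Hl; [reflexivity|]. rewrite !collected_cons.
  rewrite IH by (intro; apply Hl; right; assumption).
  rewrite !count_occ_cons_neq by (intros ->; apply Hl; left; reflexivity).
  reflexivity.
Qed.

Section Collection.
Variable f : N -> N.
Hypothesis f_central : forall t, central (f t).

Lemma collected_cons_in (T : list N) (u : N) (b : bool) (w : list (N * bool)) :
  NoDup T -> In u T ->
  collected f T ((u, b) :: w) = (if b then f u else f u ^-) ** collected f T w.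
Proof.
  assert (Hletter : central (if b then f u else f u ^-)).
  { destruct b; [|apply central_inv]; apply f_central. }
  induction T as [|t T IH]; intros HT Hu; [destruct Hu|].
  apply NoDup_cons_iff in HT as [Ht HT]. rewrite !collected_cons.
  destruct (excluded_middle_informative (u = t)) as [<-|Hne].
  - rewrite (collected_cons_notin f) by exact Ht. destruct b.
    + rewrite count_occ_cons_eq, count_occ_cons_neq by congruence. simpl gpow.
      rewrite !gmul_assoc. reflexivity.
    + rewrite count_occ_cons_neq, count_occ_cons_eq by congruence. simpl gpow.
      rewrite !gmul_assoc, (central_inv _ (f_central u)). reflexivity.
  - destruct Hu as [->|Hu]; [contradiction|].
    rewrite !count_occ_cons_neq by congruence. rewrite IH by assumption.
    rewrite !gmul_assoc. f_equal. rewrite <- Hletter, gmul_assoc. reflexivity.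
Qed.

Lemma eval_word_collected (T : list N) (w : list (N * bool)) :
  NoDup T -> word_over N T w -> eval_word N (map_letters f w) = collected f T w.
Proof.
  intro HT. induction w as [|[u b] w IH]; intro Hw.
  - symmetry. apply collected_nil.
  - rewrite collected_cons_in by (try apply (Hw (u, b)); simpl; auto).
    rewrite <- IH by (intros l Hl; apply Hw; right; exact Hl).
    reflexivity.
Qed.
End Collection.

Section NilpotentClass2.
Hypothesis comm_comm1 : forall a b c : N, comm N (comm N a b) c = e.

Lemma comm_central (a b : N) : central (comm N a b).
Proof. intro c. apply commute_comm1, comm_comm1. Qed.

Lemma comm_mul_l (a b x : N) : comm N (a ** b) x = comm N a x ** comm N b x.
Proof.
  transitivity (a ** (comm N b x ** (x ** (a ^- ** x ^-)))).
  - unfold comm. rewrite invMg. gsimpl.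
  - rewrite gmul_assoc, <- comm_central, <- gmul_assoc.
    apply comm_central.
Qed.

Lemma comm_morph_l (x : N) : morphism (fun y => comm N y x).
Proof. intros a b. apply comm_mul_l. Qed.

Lemma comm_morph_r (s : N) : morphism (comm N s).
Proof.
  intros a b. rewrite <- !(invg_comm _ s), comm_mul_l, invMg.
  apply central_inv, comm_central.
Qed.

Lemma comm_gpow (u v : N) (a b : nat) :
  comm N (gpow N u a) (gpow N v b) = gpow N (comm N u v) (a * b).
Proof.
  rewrite (morph_gpow _ (comm_morph_l _)), (morph_gpow _ (comm_morph_r u)).
  symmetry. apply gpow_mul.
Qed.
End NilpotentClass2.
End GroupFacts.

Section WordLength.
Variable N : Group.
Variable S : list N.
Local Notation "a ** b" := (gmul N a b) (at level 40, left associativity).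
Local Notation "a ^-" := (ginv N a) (at level 30).
Local Notation e := (gone N).

Definition word_within (h : N) (B : R) : Prop :=
  exists w, word_over N S w /\ eval_word N w = h /\ INR (length w) <= B.

Lemma eval_word_app (w1 w2 : list (N * bool)) :
  eval_word N (w1 ++ w2) = eval_word N w1 ** eval_word N w2.
Proof.
  induction w1 as [|l w1 IH]; simpl; [rewrite gmul_1l|rewrite IH, gmul_assoc]; reflexivity.
Qed.

Definition inverse_word (w : list (N * bool)) : list (N * bool) :=
  rev (map (fun l => (fst l, negb (snd l))) w).

Lemma eval_word_inverse (w : list (N * bool)) :
  eval_word N (inverse_word w) = (eval_word N w) ^-.
Proof.
  unfold inverse_word. induction w as [|[u b] w IH]; simpl; [symmetry; apply invg1|].
  rewrite eval_word_app, IH, invMg. simpl. rewrite gmul_1r.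
  destruct b; simpl; [|rewrite invgK]; reflexivity.
Qed.

Lemma word_within_le (h : N) (B B' : R) : B <= B' -> word_within h B -> word_within h B'.
Proof. intros HB [w [Hw [Hh Hl]]]. exists w. repeat split; [assumption..|lra]. Qed.

Lemma word_within1 : word_within e 0.
Proof. exists []. repeat split; [intros l []|simpl; lra]. Qed.

Lemma word_within_gen (u : N) : In u S -> word_within u 1.
Proof.
  intro Hu. exists [(u, true)]. repeat split.
  - intros l [<-|[]]. exact Hu.
  - apply gmul_1r.
  - simpl. lra.
Qed.

Lemma word_within_mul (a b : N) (A B : R) :
  word_within a A -> word_within b B -> word_within (a ** b) (A + B).
Proof.
  intros [wa [Ha [<- La]]] [wb [Hb [<- Lb]]]. exists (wa ++ wb). repeat split.
  - intros l Hl. apply in_app_or in Hl as [Hl|Hl]; auto.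
  - apply eval_word_app.
  - rewrite length_app, plus_INR. lra.
Qed.

Lemma word_within_inv (a : N) (A : R) : word_within a A -> word_within (a ^-) A.
Proof.
  intros [w [Hw [<- Lw]]]. exists (inverse_word w). repeat split.
  - intros l Hl. unfold inverse_word in Hl.
    apply in_rev, in_map_iff in Hl as [l' [<- Hl']]. exact (Hw l' Hl').
  - apply eval_word_inverse.
  - unfold inverse_word. rewrite length_rev, length_map. exact Lw.
Qed.

Lemma word_within_gpow (a : N) (A : R) (k : nat) :
  word_within a A -> word_within (gpow N a k) (INR k * A).
Proof.
  intro Ha. induction k as [|k IH]; simpl gpow.
  - apply (word_within_le _ 0); [simpl; lra|apply word_within1].
  - rewrite S_INR. apply (word_within_le _ (A + INR k * A)); [lra|].
    apply word_within_mul; assumption.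
Qed.

Lemma word_within_comm (a b : N) (A B : R) :
  word_within a A -> word_within b B -> word_within (comm N a b) (2 * A + 2 * B).
Proof.
  intros Ha Hb. apply (word_within_le _ (A + (B + (A + B)))); [lra|].
  repeat apply word_within_mul; try apply word_within_inv; assumption.
Qed.

Lemma word_length_le (h : N) (B : R) :
  word_within h B -> exists k, is_word_length N S h k /\ INR k <= B.
Proof.
  intros [w [Hw [Hh Hl]]].
  set (P k := exists w', word_over N S w' /\ eval_word N w' = h /\ length w' = k).
  destruct (dec_inh_nat_subset_has_unique_least_element P)
    as [k [[[w' [Hw' [Hh' Hk]]] Hmin] _]].
  - intro k. apply classic.
  - exists (length w), w. auto.
  - exists k. split.
    + split; [exists w'; auto|]. intros w'' Hw'' Hh''. apply Hmin. exists w''. auto.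
    + apply (Rle_trans _ (INR (length w))); [|exact Hl].
      apply le_INR, Hmin. exists w. auto.
Qed.

Lemma bounded_gen_set_le (X : list N) (B : R) : 0 <= B ->
  (forall h, In h X -> word_within h B) ->
  exists m, bounded_gen_set N S X m /\ INR m <= B.
Proof.
  intro HB. induction X as [|h X IH]; intro HX.
  { exists 0%nat. split; [intros h []|simpl; exact HB]. }
  destruct (word_length_le h B (HX h (or_introl eq_refl))) as [k [Hk HkB]].
  destruct IH as [m [Hm HmB]]; [intros h' Hh'; apply HX; right; exact Hh'|].
  exists (Nat.max k m). split.
  - intros h' [<-|Hh'].
    + exists k. split; [exact Hk|lia].
    + destruct (Hm h' Hh') as [k' [Hk' Hk'm]]. exists k'. split; [exact Hk'|lia].
  - destruct (Nat.max_spec k m) as [[_ ->]|[_ ->]]; assumption.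
Qed.

Lemma subgroup_norm_le (H : N -> Prop) (X : list N) (B : R) (m : nat) : 0 <= B ->
  generates N X H -> (forall h, In h X -> word_within h B) ->
  is_subgroup_norm N S H m -> INR m <= B.
Proof.
  intros HB HX HXB [_ Hmin].
  destruct (bounded_gen_set_le X B HB HXB) as [m' [Hm' Hm'B]].
  apply (Rle_trans _ (INR m')); [apply le_INR, (Hmin X)|]; assumption.
Qed.

Lemma INR_le_sqrt (a k : nat) : (a * a <= k)%nat -> INR a <= sqrt (INR k).
Proof.
  intro H. rewrite <- (sqrt_square (INR a)) by apply pos_INR.
  apply sqrt_le_1_alt. rewrite <- mult_INR. apply le_INR, H.
Qed.

Section NilpotentClass2.
Hypothesis comm_comm1 : forall a b c : N, comm N (comm N a b) c = e.

Lemma word_within_gpow_comm (u v : N) (k : nat) : In u S -> In v S ->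
  word_within (gpow N (comm N u v) k) (12 * sqrt (INR k)).
Proof.
  intros Hu Hv. destruct (Nat.eq_dec k 0) as [->|Hk0].
  { apply (word_within_le _ 0); [simpl; rewrite sqrt_0; lra|apply word_within1]. }
  set (a := Nat.sqrt k). set (b := (k / a)%nat). set (r := (k mod a)%nat).
  assert (Ha : (a * a <= k < (a + 1) * (a + 1))%nat)
    by (pose proof (Nat.sqrt_spec k); unfold a; lia).
  assert (Ha0 : (a <> 0)%nat) by (intro Ha0; rewrite Ha0 in Ha; lia).
  assert (Hk : k = (a * b + r)%nat) by apply Nat.div_mod_eq.
  assert (Hb : (b <= a + 2)%nat) by (apply Nat.Div0.div_le_upper_bound; nia).
  assert (Hr : (r < a)%nat) by (apply Nat.mod_upper_bound, Ha0).
  assert (Hsplit : gpow N (comm N u v) k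
                   = comm N (gpow N u a) (gpow N v b) ** gpow N (comm N u v) r).
  { rewrite comm_gpow, <- gpow_add, <- Hk by exact comm_comm1. reflexivity. }
  rewrite Hsplit.
  apply (word_within_le _ (2 * (INR a * 1) + 2 * (INR b * 1) + INR r * (2 * 1 + 2 * 1))).
  - assert (Hnat : INR (2 * a + 2 * b + 4 * r) <= INR (12 * a)) by (apply le_INR; lia).
    rewrite !plus_INR, !mult_INR in Hnat. simpl in Hnat.
    pose proof (INR_le_sqrt a k (proj1 Ha)). lra.
  - apply word_within_mul; [|apply word_within_gpow]; apply word_within_comm;
      try apply word_within_gpow; apply word_within_gen; assumption.
Qed.

Lemma word_within_collected_comm (s : N) (T : list N) (w : list (N * bool)) :
  In s S -> incl T S ->
  word_within (collected N (comm N s) T w) (INR (length T) * (24 * sqrt (INR (length w)))).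
Proof.
  intro Hs. induction T as [|t T IH]; intro HT.
  { apply (word_within_le _ 0); [simpl; lra|apply word_within1]. }
  assert (Ht : In t S) by (apply HT; left; reflexivity).
  rewrite collected_cons, invg_comm.
  set (p := count_occ (letter_eq_dec N) w (t, true)).
  set (q := count_occ (letter_eq_dec N) w (t, false)).
  apply (word_within_le _ (12 * sqrt (INR p) + 12 * sqrt (INR q)
                           + INR (length T) * (24 * sqrt (INR (length w))))).
  - assert (Hp : sqrt (INR p) <= sqrt (INR (length w)))
      by (apply sqrt_le_1_alt, le_INR, count_occ_bound).
    assert (Hq : sqrt (INR q) <= sqrt (INR (length w)))
      by (apply sqrt_le_1_alt, le_INR, count_occ_bound).
    simpl length. rewrite S_INR. lra.
  - apply word_within_mul;
      [apply word_within_mul|apply IH; intros y Hy; apply HT; right; exact Hy];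
      apply word_within_gpow_comm; assumption.
Qed.

Lemma word_within_comm_gen (s : N) (w : list (N * bool)) : In s S -> word_over N S w ->
  word_within (comm N s (eval_word N w)) (INR (length S) * (24 * sqrt (INR (length w)))).
Proof.
  intros Hs Hw.
  set (T := nodup (fun a b : N => excluded_middle_informative (a = b)) S).
  assert (HT : NoDup T) by apply NoDup_nodup.
  assert (HTS : incl T S) by (intros y Hy; apply nodup_In in Hy; exact Hy).
  rewrite (morph_eval_word _ _ (comm_morph_r _ comm_comm1 s)).
  rewrite (eval_word_collected _ _ (comm_central _ comm_comm1 s) T w HT)
    by (intros l Hl; apply nodup_In, Hw, Hl).
  apply (word_within_le _ (INR (length T) * (24 * sqrt (INR (length w))))).
  - apply Rmult_le_compat_r; [pose proof (sqrt_pos (INR (length w))); lra|].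
    apply le_INR, NoDup_incl_length; assumption.
  - apply word_within_collected_comm; assumption.
Qed.

Lemma generates_I (x : N) : (forall g : N, exists w, word_over N S w /\ eval_word N w = g) ->
  generates N (map (fun s => comm N s x) S) (I_ N x).
Proof.
  intro Hgen. split.
  - intros h Hh. apply in_map_iff in Hh as [s [<- _]]. exists s. reflexivity.
  - intros h [y ->]. destruct (Hgen y) as [w [Hw <-]].
    exists (map_letters N (fun y => comm N y x) w). split.
    + intros l Hl. apply in_map_iff in Hl as [l' [<- Hl']].
      apply (in_map (fun s => comm N s x)), Hw, Hl'.
    + symmetry. apply (morph_eval_word _ (fun y => comm N y x)), comm_morph_l, comm_comm1.
Qed.
End NilpotentClass2.
End WordLength.

Theorem mainTheorem14 (N : Group) (S : list N)
  (Hgen : forall g : N, exists w, word_over N S w /\ eval_word N w = g)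
  (Htf : torsion_free N) (Hcl : nilpotent_class_2 N) :
  exists C : R, C > 0 /\
    forall (x : N) (n m : nat),
      is_word_length N S x n ->
      is_subgroup_norm N S (I_ N x) m ->
      INR m <= C * sqrt (INR n).
Proof.
  destruct Hcl as [Hcomm_central _].
  pose proof (pos_INR (length S)) as HS.
  exists (24 * INR (length S) + 1). split; [lra|].
  intros x n m [[w [Hw [Hx <-]]] _] Hm.
  pose proof (sqrt_pos (INR (length w))) as Hsqrt.
  set (B := INR (length S) * (24 * sqrt (INR (length w)))).
  assert (HB : 0 <= B) by (unfold B; nra).
  apply (Rle_trans _ B); [|unfold B; nra].
  apply (subgroup_norm_le N S _ _ B _ HB (generates_I N S Hcomm_central x Hgen)); [|exact Hm].
  intros h Hh. apply in_map_iff in Hh as [s [<- Hs]]. rewrite <- Hx.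
  apply word_within_comm_gen; assumption.
Qed.
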